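(* Let $F$ be any subfield of $\mathbb{R}$ and $r\in F$. Then (1) $T[F]$ proves $\forall x\,(x\le r\rightarrow x^2-2x+1\ge0)$ if and only if $r<1$; and (2) $T[F]$ proves $\forall x\,(x\ge r\rightarrow x^2-2x+1\ge0)$ if and only if $r>1$.
   Context: For $a\in F$, $f_a$ is a unary function symbol interpreted as $f_a(x)=ax$; a constant $c\in F$ is denoted by the term $f_c(1)$. $x^2$ denotes $x\times x$ and $2x$ denotes $f_2(x)$. $T_{\mathrm{add}}[F]$ is the set of sentences true in $(\mathbb{R},0,1,+,-,<,(f_a)_{a\in F})$, $T_{\mathrm{mult}}[F]$ the set of sentences true in $(\mathbb{R},0,1,\times,\div,<,(f_a)_{a\in F})$ with $x\div0=0$, and $T[F]=T_{\mathrm{add}}[F]\cup T_{\mathrm{mult}}[F]$, a theory in the union of the two languages. *)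

From Stdlib Require Import Reals List.
Open Scope R_scope.

Inductive term : Type :=
| TVar  : nat -> term
| TZero : term
| TOne  : term
| TAdd  : term -> term -> term
| TSub  : term -> term -> term
| TMul  : term -> term -> term
| TDiv  : term -> term -> term
| TF    : R -> term -> term.        (* f_a, unary, a must lie in F *)

Inductive form : Type :=
| FBot : form
| FEq  : term -> term -> form
| FLt  : term -> term -> form
| FImp : form -> form -> form
| FAll : form -> form.               (* binds de Bruijn variable 0 *)

Definition FNot (A : form) : form := FImp A FBot.
Definition FOr (A B : form) : form := FImp (FNot A) B.

Fixpoint add_term (F : R -> Prop) (t : term) : Prop :=
  match t with
  | TVar _ | TZero | TOne => True
  | TAdd u v | TSub u v => add_term F u /\ add_term F v
  | TMul _ _ | TDiv _ _ => False
  | TF a u => F a /\ add_term F u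
  end.

Fixpoint mult_term (F : R -> Prop) (t : term) : Prop :=
  match t with
  | TVar _ | TZero | TOne => True
  | TMul u v | TDiv u v => mult_term F u /\ mult_term F v
  | TAdd _ _ | TSub _ _ => False
  | TF a u => F a /\ mult_term F u
  end.

Fixpoint lang_form (P : term -> Prop) (A : form) : Prop :=
  match A with
  | FBot => True
  | FEq u v | FLt u v => P u /\ P v
  | FImp B C => lang_form P B /\ lang_form P C
  | FAll B => lang_form P B
  end.

Fixpoint term_bound (k : nat) (t : term) : Prop :=
  match t with
  | TVar n => (n < k)%nat
  | TZero | TOne => True
  | TAdd u v | TSub u v | TMul u v | TDiv u v => term_bound k u /\ term_bound k v
  | TF _ u => term_bound k u
  end.

Fixpoint form_bound (k : nat) (A : form) : Prop :=
  match A with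
  | FBot => True
  | FEq u v | FLt u v => term_bound k u /\ term_bound k v
  | FImp B C => form_bound k B /\ form_bound k C
  | FAll B => form_bound (S k) B
  end.

Definition sentence (A : form) : Prop := form_bound 0 A.

(** * Semantics in the reals (with x ÷ 0 = 0, f_a(x) = a x) *)
Definition scons {X : Type} (x : X) (f : nat -> X) (n : nat) : X :=
  match n with O => x | S k => f k end.

Definition rdiv0 (x y : R) : R := if Req_dec_T y 0 then 0 else x / y.

Fixpoint evalR (e : nat -> R) (t : term) : R :=
  match t with
  | TVar n => e n
  | TZero => 0
  | TOne => 1
  | TAdd u v => evalR e u + evalR e v
  | TSub u v => evalR e u - evalR e v
  | TMul u v => evalR e u * evalR e v
  | TDiv u v => rdiv0 (evalR e u) (evalR e v)
  | TF a u => a * evalR e u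
  end.

Fixpoint satR (e : nat -> R) (A : form) : Prop :=
  match A with
  | FBot => False
  | FEq u v => evalR e u = evalR e v
  | FLt u v => evalR e u < evalR e v
  | FImp B C => satR e B -> satR e C
  | FAll B => forall x : R, satR (scons x e) B
  end.

Definition T_add (F : R -> Prop) (A : form) : Prop :=
  lang_form (add_term F) A /\ sentence A /\ forall e, satR e A.
Definition T_mult (F : R -> Prop) (A : form) : Prop :=
  lang_form (mult_term F) A /\ sentence A /\ forall e, satR e A.
Definition T_union (F : R -> Prop) (A : form) : Prop :=
  T_add F A \/ T_mult F A.

Fixpoint subst_t (s : nat -> term) (t : term) : term :=
  match t with
  | TVar n => s n
  | TZero => TZero
  | TOne => TOne
  | TAdd u v => TAdd (subst_t s u) (subst_t s v)
  | TSub u v => TSub (subst_t s u) (subst_t s v)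
  | TMul u v => TMul (subst_t s u) (subst_t s v)
  | TDiv u v => TDiv (subst_t s u) (subst_t s v)
  | TF a u => TF a (subst_t s u)
  end.

Definition shift_t : term -> term := subst_t (fun n => TVar (S n)).

Definition up (s : nat -> term) : nat -> term := scons (TVar 0) (fun n => shift_t (s n)).

Fixpoint subst_f (s : nat -> term) (A : form) : form :=
  match A with
  | FBot => FBot
  | FEq u v => FEq (subst_t s u) (subst_t s v)
  | FLt u v => FLt (subst_t s u) (subst_t s v)
  | FImp B C => FImp (subst_f s B) (subst_f s C)
  | FAll B => FAll (subst_f (up s) B)
  end.

Definition shift_f : form -> form := subst_f (fun n => TVar (S n)).

Definition inst (A : form) (t : term) : form := subst_f (scons t TVar) A.

Inductive deriv : list form -> form -> Prop :=
| D_ax    : forall G A, In A G -> deriv G A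
| D_impI  : forall G A B, deriv (A :: G) B -> deriv G (FImp A B)
| D_impE  : forall G A B, deriv G (FImp A B) -> deriv G A -> deriv G B
| D_raa   : forall G A, deriv (FNot A :: G) FBot -> deriv G A
| D_allI  : forall G A, deriv (map shift_f G) A -> deriv G (FAll A)
| D_allE  : forall G A t, deriv G (FAll A) -> deriv G (inst A t)
| D_refl  : forall G t, deriv G (FEq t t)
| D_eqE   : forall G A s t, deriv G (FEq s t) -> deriv G (inst A s) -> deriv G (inst A t).

Definition proves (T : form -> Prop) (A : form) : Prop :=
  exists G : list form, (forall B, In B G -> T B) /\ deriv G A.

Record is_subfield (F : R -> Prop) : Prop := {
  sf_0 : F 0; sf_1 : F 1;
  sf_add : forall x y, F x -> F y -> F (x + y);
  sf_opp : forall x, F x -> F (- x);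
  sf_mul : forall x y, F x -> F y -> F (x * y);
  sf_inv : forall x, F x -> x <> 0 -> F (/ x) }.

Definition cst (c : R) : term := TF c TOne.
Definition poly (x : term) : term := TAdd (TSub (TMul x x) (TF 2 x)) TOne.
Definition le_f (u v : term) : form := FOr (FLt u v) (FEq u v).

Definition phi_le (r : R) : form :=
  FAll (FImp (le_f (TVar 0) (cst r)) (le_f TZero (poly (TVar 0)))).
Definition phi_ge (r : R) : form :=
  FAll (FImp (le_f (cst r) (TVar 0)) (le_f TZero (poly (TVar 0)))).

From Pilot Require Import Defs.
From mathcomp Require filter.
From Stdlib Require Import Reals Lra Lia Psatz List Classical ClassicalEpsilon FunctionalExtensionality.
Open Scope R_scope.

(* If r < 1, cover [0, r] by finitely many intervals [a, a + h] with a in F, a >= 0 and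
   2h <= (1 - a)^2: on each of them y >= a x already forces y - 2x + 1 >= 0.  This is a single
   true additive sentence; with the true multiplicative sentences x*x >= 0 and
   x >= a -> x*x >= a x, instantiated at y := x*x, it derives the claim (x < 0 is trivial).
   For r > 1 the grid covers [r, 2] instead.

   Conversely, take a nonprincipal ultrapower of R and transport its multiplicative structure
   along the map tau which, on the monad of each standard s <> 0, sends s + s u to s + s w(u),
   where w(u) = u^2 for u >= 0 and w(u) = - sqrt (- u) for u < 0, and fixes everything else.
   tau is an order automorphism commuting with every f_a and fixing 0 and 1, so the result
   still models T_mult, while by Los its additive part models T_add.  But for infinitesimal
   e > 0 its square of x = 1 - e^2 is 1 - (2e - e^2)^2 and its square of x = 1 + e is
   1 + sqrt (2e^2 + e^4); either way x^2 - 2x + 1 < 0. *)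

(** * Structures and soundness *)

(* Equality is interpreted by a congruence [deq] rather than by Leibniz
   equality, so that ultrapowers need not be quotiented. *)
Record lstruct := {
  dom : Type;
  deq : dom -> dom -> Prop;
  dlt : dom -> dom -> Prop;
  d0 : dom;
  d1 : dom;
  dadd : dom -> dom -> dom;
  dsub : dom -> dom -> dom;
  dmul : dom -> dom -> dom;
  ddiv : dom -> dom -> dom;
  dscale : R -> dom -> dom }.

Fixpoint ev (M : lstruct) (e : nat -> dom M) (t : term) : dom M :=
  match t with
  | TVar n => e n
  | TZero => d0 M
  | TOne => d1 M
  | TAdd u v => dadd M (ev M e u) (ev M e v)
  | TSub u v => dsub M (ev M e u) (ev M e v)
  | TMul u v => dmul M (ev M e u) (ev M e v)
  | TDiv u v => ddiv M (ev M e u) (ev M e v)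
  | TF a u => dscale M a (ev M e u)
  end.

Fixpoint sat (M : lstruct) (e : nat -> dom M) (A : form) : Prop :=
  match A with
  | FBot => False
  | FEq u v => deq M (ev M e u) (ev M e v)
  | FLt u v => dlt M (ev M e u) (ev M e v)
  | FImp B C => sat M e B -> sat M e C
  | FAll B => forall x : dom M, sat M (scons x e) B
  end.

Record is_congruence (M : lstruct) : Prop := {
  deq_refl : forall x, deq M x x;
  deq_sym : forall x y, deq M x y -> deq M y x;
  deq_trans : forall x y z, deq M x y -> deq M y z -> deq M x z;
  dlt_compat : forall x x' y y', deq M x x' -> deq M y y' -> dlt M x y -> dlt M x' y';
  dadd_compat : forall x x' y y', deq M x x' -> deq M y y' -> deq M (dadd M x y) (dadd M x' y');
  dsub_compat : forall x x' y y', deq M x x' -> deq M y y' -> deq M (dsub M x y) (dsub M x' y');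
  dmul_compat : forall x x' y y', deq M x x' -> deq M y y' -> deq M (dmul M x y) (dmul M x' y');
  ddiv_compat : forall x x' y y', deq M x x' -> deq M y y' -> deq M (ddiv M x y) (ddiv M x' y');
  dscale_compat : forall a x x', deq M x x' -> deq M (dscale M a x) (dscale M a x') }.

Section Semantics.

Variable M : lstruct.

Lemma ev_subst e s t : ev M e (subst_t s t) = ev M (fun n => ev M e (s n)) t.
Proof. induction t; simpl; congruence. Qed.

Lemma ev_up e x s :
  (fun n => ev M (scons x e) (Defs.up s n)) = scons x (fun n => ev M e (s n)).
Proof.
  apply functional_extensionality; intros [|n]; simpl; [reflexivity|].
  unfold shift_t; now rewrite ev_subst.
Qed.

Lemma sat_subst A : forall s e, sat M e (subst_f s A) <-> sat M (fun n => ev M e (s n)) A.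
Proof.
  induction A; intros s e; simpl; rewrite ?ev_subst; try tauto.
  - now rewrite IHA1, IHA2.
  - split; intros H x; specialize (H x); rewrite IHA, ev_up in *; exact H.
Qed.

Lemma sat_shift e x A : sat M (scons x e) (shift_f A) <-> sat M e A.
Proof. unfold shift_f; now rewrite sat_subst. Qed.

Lemma sat_inst e A t : sat M e (inst A t) <-> sat M (scons (ev M e t) e) A.
Proof.
  unfold inst; rewrite sat_subst.
  replace (fun n => ev M e (scons t TVar n)) with (scons (ev M e t) e); [tauto|].
  apply functional_extensionality; intros [|n]; reflexivity.
Qed.

Hypothesis HM : is_congruence M.

Lemma ev_compat e e' t :
  (forall n, deq M (e n) (e' n)) -> deq M (ev M e t) (ev M e' t).
Proof.
  intros H; induction t; simpl; auto using deq_refl,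
    dadd_compat, dsub_compat, dmul_compat, ddiv_compat, dscale_compat.
Qed.

Lemma scons_compat e e' x x' : deq M x x' ->
  (forall n, deq M (e n) (e' n)) -> forall n, deq M (scons x e n) (scons x' e' n).
Proof. intros Hx H [|n]; simpl; auto. Qed.

Lemma sat_compat A : forall e e',
  (forall n, deq M (e n) (e' n)) -> sat M e A -> sat M e' A.
Proof.
  induction A; intros e e' H; simpl.
  - tauto.
  - pose proof (ev_compat e e' t H); pose proof (ev_compat e e' t0 H).
    eauto using deq_trans, deq_sym.
  - apply dlt_compat; auto using ev_compat.
  - assert (H' : forall n, deq M (e' n) (e n)) by auto using deq_sym.
    eauto.
  - intros HA x; exact (IHA _ _ (scons_compat e e' x x (deq_refl _ HM x) H) (HA x)).
Qed.

Theorem soundness G A : deriv G A ->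
  forall e, (forall B, In B G -> sat M e B) -> sat M e A.
Proof.
  induction 1; intros e HG; simpl in *.
  - auto.
  - intros HA; apply IHderiv; intros B0 [<-|HB]; auto.
  - apply IHderiv1; auto.
  - apply NNPP; intros HA; apply (IHderiv e); intros B0 [<-|HB]; simpl; auto.
  - intros x; apply IHderiv; intros B HB; apply in_map_iff in HB.
    destruct HB as [B0 [<- HB]]; apply sat_shift; auto.
  - apply sat_inst; apply IHderiv; auto.
  - apply HM.
  - specialize (IHderiv2 e HG); rewrite sat_inst in *.
    apply (sat_compat A (scons (ev M e s) e)); auto.
    apply scons_compat; auto using deq_refl.
Qed.

End Semantics.

(** * Ultrafilters and ultrapowers *)

Record free_ultrafilter (U : (nat -> Prop) -> Prop) : Prop := {
  uf_mono : forall A B : nat -> Prop, U A -> (forall n, A n -> B n) -> U B;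
  uf_and : forall A B : nat -> Prop, U A -> U B -> U (fun n => A n /\ B n);
  uf_proper : ~ U (fun _ => False);
  uf_ultra : forall A : nat -> Prop, U A \/ U (fun n => ~ A n);
  uf_cofinite : forall N, U (fun n => (N <= n)%nat) }.

Lemma free_ultrafilter_exists : exists U, free_ultrafilter U.
Proof.
  destruct (filter.ultraFilterLemma (@filter.eventually_filter)) as [G [GU sFG]].
  exists G; split.
  - intros A B GA AB; exact (filter.filterS AB GA).
  - intros A B GA GB; exact (filter.filterI GA GB).
  - exact (filter.filter_not_empty G).
  - intros A; exact (filter.in_ultra_setVsetC A GU).
  - intros N; apply sFG; exists N; [exact I|]. intros n Hn; exact (ssrbool.elimT ssrnat.leP Hn).
Qed.

Section UltrafilterFacts.

Variable U : (nat -> Prop) -> Prop.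
Hypothesis HU : free_ultrafilter U.

Lemma uf_true (A : nat -> Prop) : (forall n, A n) -> U A.
Proof. intros H; apply (uf_mono U HU _ _ (uf_cofinite U HU 0)); auto. Qed.

Lemma uf_mono2 (A B C : nat -> Prop) :
  U A -> U B -> (forall n, A n -> B n -> C n) -> U C.
Proof. intros HA HB H; apply (uf_mono U HU _ _ (uf_and U HU _ _ HA HB)); firstorder. Qed.

Lemma uf_witness (A : nat -> Prop) : U A -> exists n, A n.
Proof.
  intros H; apply NNPP; intros Hn; apply (uf_proper U HU).
  apply (uf_mono U HU _ _ H); eauto.
Qed.

Lemma uf_disjoint (A B : nat -> Prop) :
  U A -> U B -> (forall n, A n -> B n -> False) -> False.
Proof.
  intros HA HB H; destruct (uf_witness _ (uf_and U HU _ _ HA HB)) as [n [? ?]]; eauto.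
Qed.

Lemma uf_imp (A B : nat -> Prop) : (U A -> U B) <-> U (fun n => A n -> B n).
Proof.
  split.
  - intros H; destruct (uf_ultra U HU A) as [HA|HA].
    + apply (uf_mono U HU _ _ (H HA)); auto.
    + apply (uf_mono U HU _ _ HA); tauto.
  - intros H HA; apply (uf_mono2 _ _ _ H HA); auto.
Qed.

Lemma uf_forall (P : nat -> R -> Prop) :
  (forall x : nat -> R, U (fun n => P n (x n))) <-> U (fun n => forall r, P n r).
Proof.
  split.
  - intros H; destruct (uf_ultra U HU (fun n => forall r, P n r)) as [|Hn]; [assumption|].
    exfalso.
    set (x n := epsilon (inhabits 0) (fun r => ~ P n r)).
    apply (uf_disjoint _ _ (H x) Hn); intros n Hx Hall.
    apply not_all_ex_not in Hall; exact (epsilon_spec _ _ Hall Hx).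
  - intros H x; apply (uf_mono U HU _ _ H); auto.
Qed.

Lemma uf_le (a b : nat -> R) :
  (~ U (fun n => a n < b n) -> U (fun n => a n = b n)) <-> U (fun n => a n <= b n).
Proof.
  split.
  - intros H; destruct (uf_ultra U HU (fun n => a n < b n)) as [Hlt|Hge].
    + apply (uf_mono U HU _ _ Hlt); intros n; lra.
    + refine (uf_mono U HU _ _ (H _) _); [|intros n; lra].
      intros Hlt; exact (uf_disjoint _ _ Hlt Hge (fun n => ltac:(tauto))).
  - intros Hle Hnlt; destruct (uf_ultra U HU (fun n => a n < b n)) as [|Hge]; [contradiction|].
    apply (uf_mono2 _ _ _ Hle Hge); intros n; lra.
Qed.

End UltrafilterFacts.

Section Ultrapower.

Variable U : (nat -> Prop) -> Prop.
Hypothesis HU : free_ultrafilter U.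

Definition ultrapower : lstruct := {|
  dom := nat -> R;
  deq := fun x y => U (fun n => x n = y n);
  dlt := fun x y => U (fun n => x n < y n);
  d0 := fun _ => 0;
  d1 := fun _ => 1;
  dadd := fun x y n => x n + y n;
  dsub := fun x y n => x n - y n;
  dmul := fun x y n => x n * y n;
  ddiv := fun x y n => rdiv0 (x n) (y n);
  dscale := fun a x n => a * x n |}.

Lemma ultrapower_congruence : is_congruence ultrapower.
Proof.
  constructor; simpl; intros.
  - apply uf_true; auto.
  - apply (uf_mono U HU _ _ H); auto.
  - apply (uf_mono2 U HU _ _ _ H H0); congruence.
  - apply (uf_mono2 U HU _ _ _ (uf_and U HU _ _ H H0) H1); intros n [<- <-]; auto.
  - apply (uf_mono2 U HU _ _ _ H H0); congruence.
  - apply (uf_mono2 U HU _ _ _ H H0); congruence.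
  - apply (uf_mono2 U HU _ _ _ H H0); congruence.
  - apply (uf_mono2 U HU _ _ _ H H0); congruence.
  - apply (uf_mono U HU _ _ H); congruence.
Qed.

Lemma ev_ultrapower e t : ev ultrapower e t = fun n => evalR (fun k => e k n) t.
Proof. induction t; simpl; rewrite ?IHt, ?IHt1, ?IHt2; reflexivity. Qed.

Lemma satR_scons_pointwise (x : nat -> R) (e : nat -> nat -> R) A :
  (fun n => satR (fun k => scons x e k n) A) = (fun n => satR (scons (x n) (fun k => e k n)) A).
Proof.
  apply functional_extensionality; intros n; f_equal.
  apply functional_extensionality; intros [|k]; reflexivity.
Qed.

Theorem los A : forall e, sat ultrapower e A <-> U (fun n => satR (fun k => e k n) A).
Proof.
  induction A; intros e; simpl; rewrite ?ev_ultrapower.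
  - split; [tauto|exact (uf_proper U HU)].
  - tauto.
  - tauto.
  - rewrite IHA1, IHA2; apply uf_imp; assumption.
  - rewrite <- (uf_forall U HU (fun n r => satR (scons r (fun k => e k n)) A)).
    split; intros H x; specialize (H x); rewrite IHA, satR_scons_pointwise in *; exact H.
Qed.

End Ultrapower.

(** * Standard parts and twisting *)

Ltac rabs_lra := unfold Rabs in *; repeat destruct Rcase_abs; lra.

Section StandardPart.

Variable U : (nat -> Prop) -> Prop.
Hypothesis HU : free_ultrafilter U.

Definition ulim (x : nat -> R) (s : R) : Prop :=
  forall d, 0 < d -> U (fun n => Rabs (x n - s) < d).

Lemma ulim_unique x s t : ulim x s -> ulim x t -> s = t.
Proof.
  intros Hs Ht; destruct (Req_dec s t) as [|Hne]; [assumption|exfalso].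
  assert (Hd : 0 < Rabs (s - t) / 2) by (pose proof (Rabs_pos_lt (s - t)); lra).
  apply (uf_disjoint U HU _ _ (Hs _ Hd) (Ht _ Hd)); intros n H1 H2; rabs_lra.
Qed.

Lemma ulim_const c : ulim (fun _ => c) c.
Proof. intros d Hd; apply uf_true; auto; intros n; rewrite Rminus_diag, Rabs_R0; exact Hd. Qed.

Lemma ulim_compat x y s : U (fun n => x n = y n) -> ulim x s -> ulim y s.
Proof. intros Hxy Hx d Hd; apply (uf_mono2 U HU _ _ _ Hxy (Hx d Hd)); intros n <-; auto. Qed.

Lemma ulim_scale x s a : ulim x s -> ulim (fun n => a * x n) (a * s).
Proof.
  intros Hx d Hd; destruct (Req_dec a 0) as [->|Ha].
  - apply uf_true; auto; intros n; rewrite !Rmult_0_l, Rminus_diag, Rabs_R0; exact Hd.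
  - pose proof (Rabs_pos_lt a Ha).
    apply (uf_mono U HU _ _ (Hx (d / Rabs a) ltac:(apply Rdiv_lt_0_compat; auto))).
    intros n Hn; rewrite <- Rmult_minus_distr_l, Rabs_mult.
    apply (Rmult_lt_compat_l (Rabs a)) in Hn; [|assumption].
    replace (Rabs a * (d / Rabs a)) with d in Hn by (field; lra); exact Hn.
Qed.

Lemma ulim_le x y s t : ulim x s -> ulim y t -> U (fun n => x n < y n) -> s <= t.
Proof.
  intros Hx Hy Hxy; apply Rnot_lt_le; intros Hts.
  assert (Hd : 0 < (s - t) / 2) by lra.
  apply (uf_disjoint U HU _ _ (uf_and U HU _ _ (Hx _ Hd) (Hy _ Hd)) Hxy).
  intros n [H1 H2] H3; rabs_lra.
Qed.

Lemma ulim_lt x y s t : ulim x s -> ulim y t -> s < t -> U (fun n => x n < y n).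
Proof.
  intros Hx Hy Hst; assert (Hd : 0 < (t - s) / 2) by lra.
  apply (uf_mono2 U HU _ _ _ (Hx _ Hd) (Hy _ Hd)); intros n H1 H2; rabs_lra.
Qed.

Lemma not_ulim y s : ~ ulim y s -> exists d, 0 < d /\ U (fun n => d <= Rabs (y n - s)).
Proof.
  intros H; apply not_all_ex_not in H; destruct H as [d Hd].
  apply imply_to_and in Hd; destruct Hd as [Hd Hn]; exists d; split; [assumption|].
  destruct (uf_ultra U HU (fun n => Rabs (y n - s) < d)) as [|H]; [contradiction|].
  apply (uf_mono U HU _ _ H); intros n; lra.
Qed.

(* Order is preserved when one side moves inside a monad that the other side stays away from. *)
Lemma ulim_far_lt x x' y s d : 0 < d -> ulim x s -> ulim x' s ->
  U (fun n => d <= Rabs (y n - s)) -> U (fun n => x n < y n) -> U (fun n => x' n < y n).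
Proof.
  intros Hd Hx Hx' Hy Hxy.
  apply (uf_mono2 U HU _ _ _ (uf_and U HU _ _ (Hx d Hd) (Hx' d Hd)) (uf_and U HU _ _ Hy Hxy)).
  intros n [H1 H2] [H3 H4]; rabs_lra.
Qed.

Lemma ulim_far_gt x y y' t d : 0 < d -> ulim y t -> ulim y' t ->
  U (fun n => d <= Rabs (x n - t)) -> U (fun n => x n < y n) -> U (fun n => x n < y' n).
Proof.
  intros Hd Hy Hy' Hx Hxy.
  apply (uf_mono2 U HU _ _ _ (uf_and U HU _ _ (Hy d Hd) (Hy' d Hd)) (uf_and U HU _ _ Hx Hxy)).
  intros n [H1 H2] [H3 H4]; rabs_lra.
Qed.

(* The standard part of [x] when it is a nonzero real; [None] when [x] is
   infinitesimal or unbounded. *)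
Definition std (x : nat -> R) : option R :=
  match excluded_middle_informative (exists s, s <> 0 /\ ulim x s) with
  | left _ => Some (epsilon (inhabits 0) (fun s => s <> 0 /\ ulim x s))
  | right _ => None
  end.

Lemma std_Some x s : std x = Some s -> s <> 0 /\ ulim x s.
Proof.
  unfold std; destruct excluded_middle_informative as [H|H]; [|discriminate].
  intros E; injection E as <-; exact (epsilon_spec _ _ H).
Qed.

Lemma std_None x : std x = None -> forall s, s <> 0 -> ~ ulim x s.
Proof.
  unfold std; destruct excluded_middle_informative as [H|H]; [discriminate|eauto].
Qed.

Lemma std_of_ulim x s : s <> 0 -> ulim x s -> std x = Some s.
Proof.
  intros Hs Hx; destruct (std x) as [t|] eqn:E.
  - destruct (std_Some x t E) as [_ Ht]; f_equal; exact (ulim_unique x t s Ht Hx).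
  - exfalso; exact (std_None x E s Hs Hx).
Qed.

Lemma std_of_no_ulim x : (forall s, s <> 0 -> ~ ulim x s) -> std x = None.
Proof.
  intros H; unfold std; destruct excluded_middle_informative as [[s [Hs Hx]]|]; auto.
  exfalso; exact (H s Hs Hx).
Qed.

Lemma std_compat x y : U (fun n => x n = y n) -> std x = std y.
Proof.
  intros Hxy; assert (Hyx : U (fun n => y n = x n)) by (apply (uf_mono U HU _ _ Hxy); auto).
  destruct (std x) as [s|] eqn:E.
  - destruct (std_Some x s E) as [Hs Hx]; symmetry; apply std_of_ulim; [assumption|].
    exact (ulim_compat x y s Hxy Hx).
  - symmetry; apply std_of_no_ulim; intros s Hs Hy.
    exact (std_None x E s Hs (ulim_compat y x s Hyx Hy)).
Qed.

Lemma std_const0 : std (fun _ => 0) = None.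
Proof.
  apply std_of_no_ulim; intros s Hs H0; apply Hs.
  symmetry; exact (ulim_unique _ 0 s (ulim_const 0) H0).
Qed.

Lemma std_scale a x : a <> 0 -> std (fun n => a * x n) = option_map (Rmult a) (std x).
Proof.
  intros Ha; destruct (std x) as [s|] eqn:E; simpl.
  - destruct (std_Some x s E) as [Hs Hx].
    apply std_of_ulim; [apply Rmult_integral_contrapositive; auto|exact (ulim_scale x s a Hx)].
  - apply std_of_no_ulim; intros t Ht Hax.
    apply (std_None x E (/ a * t)); [apply Rmult_integral_contrapositive; auto with real|].
    apply (ulim_compat (fun n => / a * (a * x n))); [apply uf_true; auto; intros n; field; auto|].
    exact (ulim_scale _ t (/ a) Hax).
Qed.

End StandardPart.

Definition cont0_vanishing (f : R -> R) : Prop :=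
  f 0 = 0 /\
  forall d, 0 < d -> exists d', 0 < d' /\ forall u, Rabs u < d' -> Rabs (f u) < d.

Lemma cont0_of_incr_inverse f g : strict_increasing f -> f 0 = 0 ->
  (forall v, f (g v) = v) -> cont0_vanishing f.
Proof.
  intros Hf f0 Hfg; split; [exact f0|]; intros d Hd.
  assert (Hreflect : forall u v, f u < f v -> u < v).
  { intros u v H; apply Rnot_le_lt; intros [Hvu|<-]; [apply Hf in Hvu|]; lra. }
  assert (Hp : 0 < g d) by (apply Hreflect; rewrite Hfg, f0; exact Hd).
  assert (Hn : g (- d) < 0) by (apply Hreflect; rewrite Hfg, f0; lra).
  exists (Rmin (g d) (- g (- d))); split; [apply Rmin_glb_lt; lra|].
  intros u Hu; apply Rabs_def2 in Hu; destruct Hu as [Hu1 Hu2].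
  pose proof (Rmin_l (g d) (- g (- d))); pose proof (Rmin_r (g d) (- g (- d))).
  assert (H1 : f u < f (g d)) by (apply Hf; lra).
  assert (H2 : f (g (- d)) < f u) by (apply Hf; lra).
  rewrite Hfg in H1, H2; apply Rabs_def1; lra.
Qed.

(* [f] read in the chart [u |-> (u - s) / s] centred at [s]. *)
Definition conj_at (s : R) (f : R -> R) (u : R) : R := s + s * f ((u - s) / s).

Lemma conj_at_center s f : f 0 = 0 -> conj_at s f s = s.
Proof. intros f0; unfold conj_at; rewrite Rminus_diag, Rdiv_0_l, f0; ring. Qed.

Lemma conj_at_scale a s f u : a <> 0 -> s <> 0 ->
  conj_at (a * s) f (a * u) = a * conj_at s f u.
Proof.
  intros Ha Hs; unfold conj_at.
  replace ((a * u - a * s) / (a * s)) with ((u - s) / s) by (field; auto); ring.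
Qed.

Lemma conj_at_cancel s p q u : s <> 0 -> (forall v, p (q v) = v) ->
  conj_at s p (conj_at s q u) = u.
Proof.
  intros Hs Hpq; unfold conj_at.
  replace ((s + s * q ((u - s) / s) - s) / s) with (q ((u - s) / s)) by (field; auto).
  rewrite Hpq; field; auto.
Qed.

Lemma conj_at_incr s f : s <> 0 -> strict_increasing f -> strict_increasing (conj_at s f).
Proof.
  intros Hs Hf u v Huv; unfold conj_at.
  destruct (Rlt_dec 0 s) as [Hp|Hn].
  - assert (Hi : 0 < / s) by (apply Rinv_0_lt_compat; lra).
    assert (H : (u - s) / s < (v - s) / s) by (unfold Rdiv; nra).
    specialize (Hf _ _ H); nra.
  - assert (Hi : / s < 0) by (apply Rinv_lt_0_compat; lra).
    assert (H : (v - s) / s < (u - s) / s) by (unfold Rdiv; nra).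
    specialize (Hf _ _ H); nra.
Qed.

Section Twist.

Variable U : (nat -> Prop) -> Prop.
Hypothesis HU : free_ultrafilter U.

Definition twist (f : R -> R) (x : nat -> R) : nat -> R :=
  match std U x with
  | Some s => fun n => conj_at s f (x n)
  | None => x
  end.

Lemma twist_of_ulim f x s : s <> 0 -> ulim U x s -> twist f x = fun n => conj_at s f (x n).
Proof. intros Hs Hx; unfold twist; now rewrite (std_of_ulim U HU x s Hs Hx). Qed.

Lemma twist_compat f x y : U (fun n => x n = y n) -> U (fun n => twist f x n = twist f y n).
Proof.
  intros Hxy; unfold twist; rewrite (std_compat U HU x y Hxy).
  destruct (std U y); [|exact Hxy].
  apply (uf_mono U HU _ _ Hxy); intros n ->; reflexivity.
Qed.

Lemma twist_const0 f : twist f (fun _ => 0) = fun _ => 0.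
Proof. unfold twist; now rewrite (std_const0 U HU). Qed.

Lemma twist_scale f a x : twist f (fun n => a * x n) = fun n => a * twist f x n.
Proof.
  destruct (Req_dec a 0) as [->|Ha].
  - replace (fun n => 0 * x n) with (fun _ : nat => 0)
      by (apply functional_extensionality; intros n; ring).
    rewrite twist_const0; apply functional_extensionality; intros n; ring.
  - unfold twist; rewrite (std_scale U HU a x Ha).
    destruct (std U x) as [s|] eqn:E; [|reflexivity]; simpl.
    apply functional_extensionality; intros n.
    apply conj_at_scale; [exact Ha|exact (proj1 (std_Some U x s E))].
Qed.

Lemma ulim_conj_at f x s : cont0_vanishing f -> s <> 0 -> ulim U x s ->
  ulim U (fun n => conj_at s f (x n)) s.
Proof.
  intros [f0 Hcont] Hs Hx d Hd.
  pose proof (Rabs_pos_lt s Hs) as Has.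
  destruct (Hcont (d / Rabs s)) as [d' [Hd' H']]; [apply Rdiv_lt_0_compat; auto|].
  apply (uf_mono U HU _ _ (Hx (d' * Rabs s) ltac:(nra))); intros n Hxn.
  unfold conj_at; replace (s + s * f ((x n - s) / s) - s) with (s * f ((x n - s) / s)) by ring.
  rewrite Rabs_mult.
  assert (Hu : Rabs ((x n - s) / s) < d').
  { unfold Rdiv; rewrite Rabs_mult, Rabs_inv.
    apply (Rmult_lt_reg_r (Rabs s)); [assumption|]; field_simplify; lra. }
  specialize (H' _ Hu); apply (Rmult_lt_compat_l (Rabs s)) in H'; [|assumption].
  replace (Rabs s * (d / Rabs s)) with d in H' by (field; lra); exact H'.
Qed.

Lemma ulim_twist f x s : cont0_vanishing f -> std U x = Some s -> ulim U (twist f x) s.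
Proof.
  intros Hf E; destruct (std_Some U x s E) as [Hs Hx].
  unfold twist; rewrite E; exact (ulim_conj_at f x s Hf Hs Hx).
Qed.

Lemma std_twist f x : cont0_vanishing f -> std U (twist f x) = std U x.
Proof.
  intros Hf; destruct (std U x) as [s|] eqn:E.
  - exact (std_of_ulim U HU _ s (proj1 (std_Some U x s E)) (ulim_twist f x s Hf E)).
  - unfold twist; rewrite E; exact E.
Qed.

Lemma twist_const1 f : f 0 = 0 -> twist f (fun _ => 1) = fun _ => 1.
Proof.
  intros f0; rewrite (twist_of_ulim f _ 1 R1_neq_R0 (ulim_const U HU 1)).
  apply functional_extensionality; intros n; exact (conj_at_center 1 f f0).
Qed.

Lemma twist_cancel f g x : cont0_vanishing g -> (forall v, f (g v) = v) ->
  twist f (twist g x) = x.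
Proof.
  intros Hg Hfg; unfold twist at 1; rewrite (std_twist g x Hg).
  unfold twist; destruct (std U x) as [s|] eqn:E; [|reflexivity].
  apply functional_extensionality; intros n.
  exact (conj_at_cancel s f g (x n) (proj1 (std_Some U x s E)) Hfg).
Qed.

Lemma twist_lt f x y : cont0_vanishing f -> strict_increasing f ->
  U (fun n => x n < y n) -> U (fun n => twist f x n < twist f y n).
Proof.
  intros Hf Hinc Hxy.
  destruct (std U x) as [s|] eqn:Ex; destruct (std U y) as [t|] eqn:Ey.
  - destruct (std_Some U x s Ex) as [Hs Hx]; destruct (std_Some U y t Ey) as [_ Hy].
    destruct (Rle_lt_or_eq_dec s t (ulim_le U HU x y s t Hx Hy Hxy)) as [Hst| <-].
    + exact (ulim_lt U HU _ _ s t (ulim_twist f x s Hf Ex) (ulim_twist f y t Hf Ey) Hst).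
    + unfold twist; rewrite Ex, Ey.
      apply (uf_mono U HU _ _ Hxy); intros n; apply conj_at_incr; assumption.
  - destruct (std_Some U x s Ex) as [Hs Hx].
    destruct (not_ulim U HU y s (std_None U y Ey s Hs)) as [d [Hd Hyd]].
    replace (twist f y) with y by (unfold twist; rewrite Ey; reflexivity).
    exact (ulim_far_lt U HU x _ y s d Hd Hx (ulim_twist f x s Hf Ex) Hyd Hxy).
  - destruct (std_Some U y t Ey) as [Ht Hy].
    destruct (not_ulim U HU x t (std_None U x Ex t Ht)) as [d [Hd Hxd]].
    replace (twist f x) with x by (unfold twist; rewrite Ex; reflexivity).
    exact (ulim_far_gt U HU x y _ t d Hd Hy (ulim_twist f y t Hf Ey) Hxd Hxy).
  - unfold twist; rewrite Ex, Ey; exact Hxy.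
Qed.

End Twist.

(** * The twisted ultrapower *)

Definition warp (u : R) : R := if Rle_dec 0 u then u * u else - sqrt (- u).
Definition unwarp (v : R) : R := if Rle_dec 0 v then sqrt v else - (v * v).

Lemma warp_unwarp v : warp (unwarp v) = v.
Proof.
  unfold warp, unwarp; destruct (Rle_dec 0 v) as [Hv|Hv].
  - destruct (Rle_dec 0 (sqrt v)) as [_|H]; [exact (sqrt_sqrt v Hv)|].
    exfalso; exact (H (sqrt_pos v)).
  - destruct (Rle_dec 0 (- (v * v))) as [H|_]; [nra|].
    rewrite Ropp_involutive; replace (v * v) with (- v * - v) by ring.
    rewrite sqrt_square by lra; ring.
Qed.

Lemma unwarp_warp u : unwarp (warp u) = u.
Proof.
  unfold warp, unwarp; destruct (Rle_dec 0 u) as [Hu|Hu].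
  - destruct (Rle_dec 0 (u * u)) as [_|H]; [exact (sqrt_square u Hu)|nra].
  - pose proof (sqrt_lt_R0 (- u) ltac:(lra)).
    destruct (Rle_dec 0 (- sqrt (- u))); [lra|].
    replace (- sqrt (- u) * - sqrt (- u)) with (sqrt (- u) * sqrt (- u)) by ring.
    rewrite sqrt_sqrt; lra.
Qed.

Lemma warp_incr : strict_increasing warp.
Proof.
  intros u v Huv; unfold warp; destruct (Rle_dec 0 u); destruct (Rle_dec 0 v).
  - nra.
  - lra.
  - pose proof (sqrt_lt_R0 (- u) ltac:(lra)); nra.
  - pose proof (sqrt_lt_1 (- v) (- u) ltac:(lra) ltac:(lra) ltac:(lra)); lra.
Qed.

Lemma unwarp_incr : strict_increasing unwarp.
Proof.
  intros u v Huv; unfold unwarp; destruct (Rle_dec 0 u); destruct (Rle_dec 0 v).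
  - apply sqrt_lt_1; lra.
  - lra.
  - pose proof (sqrt_pos v); nra.
  - nra.
Qed.

Lemma warp_cont0 : cont0_vanishing warp.
Proof.
  apply (cont0_of_incr_inverse warp unwarp warp_incr); [|exact warp_unwarp].
  unfold warp; destruct (Rle_dec 0 0); [ring|lra].
Qed.

Lemma unwarp_cont0 : cont0_vanishing unwarp.
Proof.
  apply (cont0_of_incr_inverse unwarp warp unwarp_incr); [|exact unwarp_warp].
  unfold unwarp; destruct (Rle_dec 0 0); [exact sqrt_0|lra].
Qed.

Section TwistedModel.

Variable U : (nat -> Prop) -> Prop.
Hypothesis HU : free_ultrafilter U.

Definition tau : (nat -> R) -> nat -> R := twist U warp.
Definition tau_inv : (nat -> R) -> nat -> R := twist U unwarp.

Definition twisted : lstruct := {|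
  dom := nat -> R;
  deq := fun x y => U (fun n => x n = y n);
  dlt := fun x y => U (fun n => x n < y n);
  d0 := fun _ => 0;
  d1 := fun _ => 1;
  dadd := fun x y n => x n + y n;
  dsub := fun x y n => x n - y n;
  dmul := fun x y => tau_inv (fun n => tau x n * tau y n);
  ddiv := fun x y => tau_inv (fun n => rdiv0 (tau x n) (tau y n));
  dscale := fun a x n => a * x n |}.

Lemma tau_tau_inv y : tau (tau_inv y) = y.
Proof. exact (twist_cancel U HU warp unwarp y unwarp_cont0 warp_unwarp). Qed.

Lemma tau_inv_tau x : tau_inv (tau x) = x.
Proof. exact (twist_cancel U HU unwarp warp x warp_cont0 unwarp_warp). Qed.

Lemma tau_eq_iff x y : U (fun n => x n = y n) <-> U (fun n => tau x n = tau y n).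
Proof.
  split; [apply twist_compat; exact HU|intros H].
  rewrite <- (tau_inv_tau x), <- (tau_inv_tau y); exact (twist_compat U HU unwarp _ _ H).
Qed.

Lemma tau_lt_iff x y : U (fun n => x n < y n) <-> U (fun n => tau x n < tau y n).
Proof.
  split; [apply (twist_lt U HU warp x y warp_cont0 warp_incr)|intros H].
  rewrite <- (tau_inv_tau x), <- (tau_inv_tau y).
  exact (twist_lt U HU unwarp _ _ unwarp_cont0 unwarp_incr H).
Qed.

Lemma twisted_congruence : is_congruence twisted.
Proof.
  pose proof (ultrapower_congruence U HU) as HC.
  constructor; simpl; intros.
  - exact (deq_refl _ HC x).
  - exact (deq_sym _ HC x y H).
  - exact (deq_trans _ HC x y z H H0).
  - exact (dlt_compat _ HC x x' y y' H H0 H1).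
  - exact (dadd_compat _ HC x x' y y' H H0).
  - exact (dsub_compat _ HC x x' y y' H H0).
  - apply (twist_compat U HU unwarp).
    exact (dmul_compat _ HC _ _ _ _ (twist_compat U HU warp _ _ H) (twist_compat U HU warp _ _ H0)).
  - apply (twist_compat U HU unwarp).
    exact (ddiv_compat _ HC _ _ _ _ (twist_compat U HU warp _ _ H) (twist_compat U HU warp _ _ H0)).
  - exact (dscale_compat _ HC a x x' H).
Qed.

Lemma ev_twisted_add F e t : add_term F t -> ev twisted e t = ev (ultrapower U) e t.
Proof.
  induction t; simpl; intros H; try reflexivity; try contradiction;
    rewrite ?IHt1, ?IHt2, ?IHt by tauto; reflexivity.
Qed.

Lemma sat_twisted_add F A e : lang_form (add_term F) A ->
  sat twisted e A <-> sat (ultrapower U) e A.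
Proof.
  revert e; induction A; simpl; intros e H; try tauto.
  - rewrite !(ev_twisted_add F) by tauto; tauto.
  - rewrite !(ev_twisted_add F) by tauto; tauto.
  - rewrite IHA1, IHA2 by tauto; tauto.
  - split; intros H' x; apply IHA; auto.
Qed.

Lemma ev_twisted_mult F e t : mult_term F t ->
  deq (ultrapower U) (tau (ev twisted e t)) (ev (ultrapower U) (fun k => tau (e k)) t).
Proof.
  pose proof (ultrapower_congruence U HU) as HC.
  induction t; simpl; intros H; try tauto.
  - exact (deq_refl _ HC _).
  - unfold tau; rewrite twist_const0 by exact HU; exact (deq_refl _ HC _).
  - unfold tau; rewrite twist_const1 by (exact HU || exact (proj1 warp_cont0)).
    exact (deq_refl _ HC _).
  - rewrite tau_tau_inv; exact (dmul_compat _ HC _ _ _ _ (IHt1 (proj1 H)) (IHt2 (proj2 H))).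
  - rewrite tau_tau_inv; exact (ddiv_compat _ HC _ _ _ _ (IHt1 (proj1 H)) (IHt2 (proj2 H))).
  - unfold tau at 1; rewrite twist_scale by exact HU.
    exact (dscale_compat _ HC r _ _ (IHt (proj2 H))).
Qed.

Lemma sat_twisted_mult F A : lang_form (mult_term F) A ->
  forall e, sat twisted e A <-> sat (ultrapower U) (fun k => tau (e k)) A.
Proof.
  pose proof (ultrapower_congruence U HU) as HC.
  induction A; simpl; intros H e; try tauto.
  - destruct H as [H1 H2].
    pose proof (ev_twisted_mult F e t H1) as E1; pose proof (ev_twisted_mult F e t0 H2) as E2.
    rewrite tau_eq_iff; split; intros Heq.
    + exact (deq_trans _ HC _ _ _ (deq_sym _ HC _ _ E1) (deq_trans _ HC _ _ _ Heq E2)).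
    + exact (deq_trans _ HC _ _ _ E1 (deq_trans _ HC _ _ _ Heq (deq_sym _ HC _ _ E2))).
  - destruct H as [H1 H2].
    pose proof (ev_twisted_mult F e t H1) as E1; pose proof (ev_twisted_mult F e t0 H2) as E2.
    rewrite tau_lt_iff; split; intros Hlt.
    + exact (dlt_compat _ HC _ _ _ _ E1 E2 Hlt).
    + exact (dlt_compat _ HC _ _ _ _ (deq_sym _ HC _ _ E1) (deq_sym _ HC _ _ E2) Hlt).
  - rewrite IHA1, IHA2 by tauto; tauto.
  - assert (Escons : forall x, (fun k => tau (scons x e k)) = scons (tau x) (fun k => tau (e k)))
      by (intros x; apply functional_extensionality; intros [|k]; reflexivity).
    split; intros H' x.
    + rewrite <- (tau_tau_inv x), <- Escons, <- IHA by exact H; apply H'.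
    + rewrite IHA, Escons by exact H; apply H'.
Qed.

Lemma twisted_T_union F A e : T_union F A -> sat twisted e A.
Proof.
  intros [[HL [_ HA]]|[HL [_ HA]]].
  - apply (sat_twisted_add F A e HL), los; [exact HU|]; apply uf_true; auto.
  - apply (sat_twisted_mult F A HL), los; [exact HU|]; apply uf_true; auto.
Qed.

Lemma twisted_refutes F A e : ~ sat twisted e A -> ~ proves (T_union F) A.
Proof.
  intros Hn [G [HG HD]]; apply Hn.
  apply (soundness _ twisted_congruence G A HD); intros B HB.
  exact (twisted_T_union F B e (HG B HB)).
Qed.

End TwistedModel.

Definition eps (n : nat) : R := / (INR n + 4).

Lemma eps_bounds n : 0 < eps n <= / 4.
Proof.
  pose proof (pos_INR n); unfold eps; split.
  - apply Rinv_0_lt_compat; lra.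
  - apply Rinv_le_contravar; lra.
Qed.

Lemma ulim_eps_dominated U x c K : free_ultrafilter U -> 0 < K ->
  (forall n, Rabs (x n - c) <= K * eps n) -> ulim U x c.
Proof.
  intros HU HK Hx d Hd.
  destruct (archimed_cor1 (d / K) ltac:(apply Rdiv_lt_0_compat; auto)) as [N [HN HN0]].
  apply (uf_mono U HU _ _ (uf_cofinite U HU N)); intros n Hn.
  assert (Heps : eps n < d / K).
  { apply Rle_lt_trans with (/ INR N); [|exact HN].
    apply Rinv_le_contravar; [apply lt_0_INR; lia|apply le_INR in Hn; lra]. }
  specialize (Hx n); apply (Rmult_lt_compat_l K) in Heps; [|exact HK].
  replace (K * (d / K)) with d in Heps by (field; lra); lra.
Qed.

Section Counterexamples.

Variable U : (nat -> Prop) -> Prop.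
Hypothesis HU : free_ultrafilter U.

Lemma twist_near1 f x : ulim U x 1 -> twist U f x = fun n => 1 + f (x n - 1).
Proof.
  intros Hx; rewrite (twist_of_ulim U HU f x 1 R1_neq_R0 Hx).
  apply functional_extensionality; intros n; unfold conj_at; rewrite Rdiv_1_r; ring.
Qed.

Lemma tau_below1 : tau U (fun n => 1 - eps n * eps n) = fun n => 1 - eps n.
Proof.
  unfold tau; rewrite (twist_near1 warp).
  - apply functional_extensionality; intros n; pose proof (eps_bounds n).
    unfold warp; destruct Rle_dec; [nra|].
    replace (- (1 - eps n * eps n - 1)) with (eps n * eps n) by ring.
    rewrite sqrt_square; lra.
  - apply (ulim_eps_dominated U _ _ 1 HU Rlt_0_1); intros n; pose proof (eps_bounds n).
    rewrite Rabs_left1; nra.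
Qed.

Lemma tau_inv_below1 : tau_inv U (fun n => (1 - eps n) * (1 - eps n)) =
  fun n => 1 - (2 * eps n - eps n * eps n) * (2 * eps n - eps n * eps n).
Proof.
  unfold tau_inv; rewrite (twist_near1 unwarp).
  - apply functional_extensionality; intros n; pose proof (eps_bounds n).
    unfold unwarp; destruct Rle_dec; [nra|ring].
  - apply (ulim_eps_dominated U _ _ 2 HU ltac:(lra)); intros n; pose proof (eps_bounds n).
    rewrite Rabs_left1; nra.
Qed.

Lemma tau_above1 : tau U (fun n => 1 + eps n) = fun n => 1 + eps n * eps n.
Proof.
  unfold tau; rewrite (twist_near1 warp).
  - apply functional_extensionality; intros n; pose proof (eps_bounds n).
    unfold warp; destruct Rle_dec; [ring|lra].
  - apply (ulim_eps_dominated U _ _ 1 HU Rlt_0_1); intros n; pose proof (eps_bounds n).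
    rewrite Rabs_right; lra.
Qed.

Lemma tau_inv_above1 : tau_inv U (fun n => (1 + eps n * eps n) * (1 + eps n * eps n)) =
  fun n => 1 + sqrt (2 * (eps n * eps n) + (eps n * eps n) * (eps n * eps n)).
Proof.
  unfold tau_inv; rewrite (twist_near1 unwarp).
  - apply functional_extensionality; intros n; pose proof (eps_bounds n).
    unfold unwarp; destruct Rle_dec; [f_equal; f_equal; ring|nra].
  - apply (ulim_eps_dominated U _ _ 1 HU Rlt_0_1); intros n; pose proof (eps_bounds n).
    assert (eps n * eps n <= eps n / 4) by nra.
    rewrite Rabs_right by nra; nra.
Qed.

Lemma sat_twisted_le e u v :
  sat (twisted U) e (le_f u v) <-> U (fun n => ev (twisted U) e u n <= ev (twisted U) e v n).
Proof. exact (uf_le U HU _ _). Qed.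

Lemma twisted_not_phi_le r e : 1 <= r -> ~ sat (twisted U) e (phi_le r).
Proof.
  intros Hr H; specialize (H (fun n => 1 - eps n * eps n)); cbn [sat] in H.
  rewrite !sat_twisted_le in H; simpl in H.
  rewrite tau_below1, tau_inv_below1 in H.
  assert (Hx : U (fun n => 1 - eps n * eps n <= r * 1)).
  { apply uf_true; [exact HU|]; intros n; pose proof (eps_bounds n); nra. }
  destruct (uf_witness U HU _ (H Hx)) as [n Hn]; pose proof (eps_bounds n); nra.
Qed.

Lemma twisted_not_phi_ge r e : r <= 1 -> ~ sat (twisted U) e (phi_ge r).
Proof.
  intros Hr H; specialize (H (fun n => 1 + eps n)); cbn [sat] in H.
  rewrite !sat_twisted_le in H; simpl in H.
  rewrite tau_above1, tau_inv_above1 in H.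
  assert (Hx : U (fun n => r * 1 <= 1 + eps n)).
  { apply uf_true; [exact HU|]; intros n; pose proof (eps_bounds n); nra. }
  destruct (uf_witness U HU _ (H Hx)) as [n Hn]; pose proof (eps_bounds n) as [He0 He1].
  assert (Hsq : sqrt (2 * (eps n * eps n) + eps n * eps n * (eps n * eps n)) < 2 * eps n).
  { assert (Hee : 0 < eps n * eps n < 2) by nra.
    rewrite <- (sqrt_square (2 * eps n)) by lra; apply sqrt_lt_1; nra. }
  lra.
Qed.

End Counterexamples.

(** * Derivations from a finite grid *)

Fixpoint imps (Ps : list form) (C : form) : form :=
  match Ps with
  | nil => C
  | P :: Ps' => FImp P (imps Ps' C)
  end.

Lemma subst_imps s Ps C : subst_f s (imps Ps C) = imps (map (subst_f s) Ps) (subst_f s C).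
Proof. induction Ps; simpl; f_equal; auto. Qed.

Lemma deriv_imps_elim G Ps C :
  deriv G (imps Ps C) -> (forall P, In P Ps -> deriv G P) -> deriv G C.
Proof.
  revert C; induction Ps; simpl; intros C H HPs; [exact H|].
  apply IHPs; [|auto]; exact (D_impE _ _ _ H (HPs a (or_introl eq_refl))).
Qed.

Lemma satR_imps e Ps C : satR e (imps Ps C) <-> ((forall P, In P Ps -> satR e P) -> satR e C).
Proof.
  induction Ps; simpl; [firstorder|rewrite IHPs].
  split; [intros H HPs; apply H; auto|intros H Ha HPs; apply H; intros P [<-|HP]; auto].
Qed.

Lemma lang_form_imps L Ps C :
  (forall P, In P Ps -> lang_form L P) -> lang_form L C -> lang_form L (imps Ps C).
Proof. induction Ps; simpl; auto. Qed.

Lemma form_bound_imps k Ps C :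
  (forall P, In P Ps -> form_bound k P) -> form_bound k C -> form_bound k (imps Ps C).
Proof. induction Ps; simpl; auto. Qed.

Lemma satR_le_f e u v : satR e (le_f u v) <-> evalR e u <= evalR e v.
Proof.
  simpl; split; [intros H|intros H Hn; lra].
  destruct (Rlt_dec (evalR e u) (evalR e v)); [lra|right; tauto].
Qed.

Lemma subfield_2 F : is_subfield F -> F 2.
Proof. intros HF; replace 2 with (1 + 1) by ring; apply HF; apply HF. Qed.

Lemma subfield_INR F n : is_subfield F -> F (INR n).
Proof. intros HF; induction n; [apply HF|rewrite S_INR; apply HF; [assumption|apply HF]]. Qed.

Definition grid_certifies (l : list R) (P : R -> Prop) : Prop :=
  forall x y, P x -> 0 <= y -> (forall a, In a l -> a <= x -> a * x <= y) -> 0 <= y - 2 * x + 1.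

(* In the grid axiom, [x] is variable 1 and [y], to be instantiated by [x * x], is variable 0. *)
Definition grid_axiom (hyp : term -> form) (l : list R) : form :=
  FAll (FAll (FImp (hyp (TVar 1))
    (imps (le_f TZero (TVar 0)
             :: map (fun a => FImp (le_f (cst a) (TVar 1)) (le_f (TF a (TVar 1)) (TVar 0))) l)
          (le_f TZero (TAdd (TSub (TVar 0) (TF 2 (TVar 1))) TOne))))).

Definition square_nonneg_axiom : form := FAll (le_f TZero (TMul (TVar 0) (TVar 0))).

Definition square_ge_axiom (a : R) : form :=
  FAll (FImp (le_f (cst a) (TVar 0)) (le_f (TF a (TVar 0)) (TMul (TVar 0) (TVar 0)))).

Definition grid_context (hyp : term -> form) (l : list R) : list form :=
  grid_axiom hyp l :: square_nonneg_axiom :: map square_ge_axiom l.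

Lemma deriv_grid hyp l : (forall s t, subst_f s (hyp t) = hyp (subst_t s t)) ->
  deriv (grid_context hyp l) (FAll (FImp (hyp (TVar 0)) (le_f TZero (Defs.poly (TVar 0))))).
Proof.
  intros Hsub; apply D_allI.
  replace (map shift_f (grid_context hyp l)) with (grid_context hyp l)
    by (unfold shift_f; simpl; rewrite Hsub, subst_imps, !map_map; reflexivity).
  apply D_impI; set (G := hyp (TVar 0) :: grid_context hyp l).
  assert (X : deriv G (FImp (hyp (TVar 0))
    (imps (le_f TZero (TMul (TVar 0) (TVar 0)) :: map (fun a => FImp (le_f (cst a) (TVar 0))
             (le_f (TF a (TVar 0)) (TMul (TVar 0) (TVar 0)))) l)
          (le_f TZero (Defs.poly (TVar 0)))))).
  { pose proof (D_allE _ _ (TMul (TVar 0) (TVar 0))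
      (D_allE _ _ (TVar 0) (D_ax G (grid_axiom hyp l) ltac:(simpl; tauto)))) as X.
    unfold inst in X; simpl in X; rewrite !Hsub, !subst_imps, !map_map in X; exact X. }
  apply (deriv_imps_elim G _ _ (D_impE _ _ _ X (D_ax G _ (or_introl eq_refl)))).
  intros P [<-|HP].
  - exact (D_allE G _ (TVar 0) (D_ax G square_nonneg_axiom ltac:(simpl; tauto))).
  - apply in_map_iff in HP; destruct HP as [a [<- Ha]].
    refine (D_allE G _ (TVar 0) (D_ax G (square_ge_axiom a) _)).
    simpl; right; right; right; exact (in_map _ _ _ Ha).
Qed.

Section GridProof.

Variables (F : R -> Prop) (hyp : term -> form) (P : R -> Prop).
Hypothesis HF : is_subfield F.
Hypothesis hyp_subst : forall s t, subst_f s (hyp t) = hyp (subst_t s t).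
Hypothesis hyp_add : lang_form (add_term F) (hyp (TVar 1)).
Hypothesis hyp_bound : form_bound 2 (hyp (TVar 1)).
Hypothesis hyp_sat : forall e t, satR e (hyp t) <-> P (evalR e t).

Lemma satR_grid_axiom l e : grid_certifies l P -> satR e (grid_axiom hyp l).
Proof.
  intros Hl x y Hx; apply satR_imps; intros Hps; apply satR_le_f; simpl.
  apply hyp_sat in Hx; apply (Hl x y Hx).
  - pose proof (Hps _ (or_introl eq_refl)) as Hy; apply satR_le_f in Hy; simpl in Hy; lra.
  - intros a Ha Hax.
    pose proof (Hps _ (or_intror (in_map _ _ a Ha))) as Hxa; cbv beta in Hxa.
    change (satR (scons y (scons x e)) (le_f (cst a) (TVar 1)) ->
            satR (scons y (scons x e)) (le_f (TF a (TVar 1)) (TVar 0))) in Hxa.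
    rewrite !satR_le_f in Hxa; simpl in Hxa; apply Hxa; lra.
Qed.

Lemma grid_context_T l : (forall a, In a l -> F a /\ 0 <= a) -> grid_certifies l P ->
  forall B, In B (grid_context hyp l) -> T_union F B.
Proof.
  intros Hl Hcert B [<-|[<-|HB]].
  - left; split; [|split; [|intros e; exact (satR_grid_axiom l e Hcert)]].
    + split; [exact hyp_add|apply lang_form_imps].
      * intros Q [<-|HQ]; [simpl; tauto|].
        apply in_map_iff in HQ; destruct HQ as [a [<- Ha]]; simpl; pose proof (Hl a Ha); tauto.
      * simpl; pose proof (subfield_2 F HF); tauto.
    + split; [exact hyp_bound|apply form_bound_imps].
      * intros Q [<-|HQ]; [simpl; repeat split; lia|].
        apply in_map_iff in HQ; destruct HQ as [a [<- Ha]]; simpl; repeat split; lia.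
      * simpl; repeat split; lia.
  - right; split; [simpl; tauto|split; [unfold sentence; simpl; repeat split; lia|]].
    intros e x; apply satR_le_f; simpl; nra.
  - apply in_map_iff in HB; destruct HB as [a [<- Ha]]; destruct (Hl a Ha) as [Fa Ha0].
    right; split; [simpl; tauto|split; [unfold sentence; simpl; repeat split; lia|]].
    intros e x; change (satR (scons x e) (le_f (cst a) (TVar 0)) ->
                        satR (scons x e) (le_f (TF a (TVar 0)) (TMul (TVar 0) (TVar 0)))).
    rewrite !satR_le_f; simpl; nra.
Qed.

Lemma proves_of_grid l : (forall a, In a l -> F a /\ 0 <= a) -> grid_certifies l P ->
  proves (T_union F) (FAll (FImp (hyp (TVar 0)) (le_f TZero (Defs.poly (TVar 0))))).
Proof.
  intros Hl Hcert; exists (grid_context hyp l); split.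
  - exact (grid_context_T l Hl Hcert).
  - exact (deriv_grid hyp l hyp_subst).
Qed.

End GridProof.

Lemma subfield_half_sq F c : is_subfield F -> F c -> F ((1 - c) * (1 - c) / 2).
Proof.
  intros HF Fc; assert (F1c : F (1 - c)) by (apply HF; [apply HF|apply HF, Fc]).
  apply HF; [apply HF; exact F1c|apply HF; [exact (subfield_2 F HF)|lra]].
Qed.

Definition arith_grid (b h : R) (N : nat) : list R := map (fun i => b + INR i * h) (seq 0 (S N)).

Lemma In_arith_grid b h N i : (i <= N)%nat -> In (b + INR i * h) (arith_grid b h N).
Proof. intros Hi; apply (in_map (fun i => b + INR i * h)), in_seq; lia. Qed.

Lemma arith_grid_subfield F b h N : is_subfield F -> F b -> F h -> 0 <= b -> 0 <= h ->
  forall a, In a (arith_grid b h N) -> F a /\ 0 <= a.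
Proof.
  intros HF Fb Fh Hb Hh a Ha; apply in_map_iff in Ha; destruct Ha as [i [<- _]].
  pose proof (pos_INR i); split; [|nra].
  apply HF; [exact Fb|apply HF; [apply subfield_INR, HF|exact Fh]].
Qed.

Lemma arith_grid_cover b h N x : 0 < h -> b <= x ->
  exists i, (i <= N)%nat /\ b + INR i * h <= x /\ (x < b + INR i * h + h \/ i = N).
Proof.
  intros Hh Hb; induction N as [|N IH].
  - exists 0%nat; simpl; split; [lia|split; [lra|auto]].
  - destruct IH as [i [Hi [H1 [H2| ->]]]]; [exists i; split; [lia|auto]|].
    destruct (Rlt_dec x (b + INR N * h + h)).
    + exists N; split; [lia|auto].
    + exists (S N); rewrite S_INR; split; [lia|split; [lra|auto]].
Qed.

(* [y >= a x] bounds [y - 2x + 1] below by [1 - (2 - a) x], which is nonnegative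
   up to [x = a + h] as long as the step [h] is at most half the square [(1 - a)^2]. *)
Lemma tangent_bound a h x y : 0 <= a -> a <= x -> a * x <= y ->
  (x <= a + h /\ 2 * h <= (1 - a) * (1 - a)) \/ 2 <= a -> 0 <= y - 2 * x + 1.
Proof.
  intros Ha Hax Hy [[Hxh Hstep]|Ha2]; [|nra].
  destruct (Rle_dec 2 a); [nra|].
  assert ((2 - a) * x <= (2 - a) * (a + h)) by (apply Rmult_le_compat_l; lra).
  nra.
Qed.

Lemma grid_below F r : is_subfield F -> F r -> r < 1 ->
  exists l, (forall a, In a l -> F a /\ 0 <= a) /\ grid_certifies l (fun x => x <= r).
Proof.
  intros HF Fr Hr; set (h := (1 - r) * (1 - r) / 2).
  assert (Hh : 0 < h) by (unfold h; nra).
  assert (Fh : F h) by exact (subfield_half_sq F r HF Fr).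
  destruct (INR_archimed h r Hh) as [N HN].
  exists (arith_grid 0 h N); split; [apply arith_grid_subfield; auto; [apply HF|lra|lra]|].
  intros x y Hxr Hy Hl; destruct (Rlt_le_dec x 0) as [|Hx0]; [lra|].
  destruct (arith_grid_cover 0 h N x Hh Hx0) as [i [Hi [Hix Hxi]]].
  pose proof (pos_INR i).
  apply (tangent_bound (0 + INR i * h) h); [nra|exact Hix|exact (Hl _ (In_arith_grid 0 h N i Hi) Hix)|].
  left; split; [destruct Hxi as [| ->]; lra|unfold h in *; nra].
Qed.

Lemma grid_above F r : is_subfield F -> F r -> 1 < r ->
  exists l, (forall a, In a l -> F a /\ 0 <= a) /\ grid_certifies l (fun x => r <= x).
Proof.
  intros HF Fr Hr; set (h := (1 - r) * (1 - r) / 2).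
  assert (Hh : 0 < h) by (unfold h; nra).
  assert (Fh : F h) by exact (subfield_half_sq F r HF Fr).
  destruct (INR_archimed h 2 Hh) as [N HN].
  exists (arith_grid r h N); split; [apply arith_grid_subfield; auto; lra|].
  intros x y Hrx Hy Hl.
  destruct (arith_grid_cover r h N x Hh Hrx) as [i [Hi [Hix Hxi]]].
  pose proof (pos_INR i).
  apply (tangent_bound (r + INR i * h) h); [nra|exact Hix|exact (Hl _ (In_arith_grid r h N i Hi) Hix)|].
  destruct Hxi as [Hxi| ->]; [left; split; [lra|]|right; lra].
  assert (Hk : 0 <= INR i * h) by nra; revert Hk; generalize (INR i * h); intros k Hk.
  unfold h; nra.
Qed.

Lemma proves_phi_le F r : is_subfield F -> F r -> r < 1 -> proves (T_union F) (phi_le r).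
Proof.
  intros HF Fr Hr; destruct (grid_below F r HF Fr Hr) as [l [Hl Hcert]].
  refine (proves_of_grid F (fun t => le_f t (cst r)) (fun x => x <= r) HF _ _ _ _ l Hl Hcert).
  - reflexivity.
  - simpl; tauto.
  - simpl; repeat split; lia.
  - intros e t; rewrite satR_le_f; simpl; rewrite Rmult_1_r; tauto.
Qed.

Lemma proves_phi_ge F r : is_subfield F -> F r -> 1 < r -> proves (T_union F) (phi_ge r).
Proof.
  intros HF Fr Hr; destruct (grid_above F r HF Fr Hr) as [l [Hl Hcert]].
  refine (proves_of_grid F (fun t => le_f (cst r) t) (fun x => r <= x) HF _ _ _ _ l Hl Hcert).
  - reflexivity.
  - simpl; tauto.
  - simpl; repeat split; lia.
  - intros e t; rewrite satR_le_f; simpl; rewrite Rmult_1_r; tauto.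
Qed.

Theorem theorem5p3 (F : R -> Prop) (HF : is_subfield F) (r : R) (Hr : F r) :
  (proves (T_union F) (phi_le r) <-> r < 1) /\
  (proves (T_union F) (phi_ge r) <-> 1 < r).
Proof.
  destruct free_ultrafilter_exists as [U HU].
  split; split.
  - intros Hp; apply Rnot_le_lt; intros Hr1.
    exact (twisted_refutes U HU F _ (fun _ _ => 0) (twisted_not_phi_le U HU r _ Hr1) Hp).
  - exact (proves_phi_le F r HF Hr).
  - intros Hp; apply Rnot_le_lt; intros Hr1.
    exact (twisted_refutes U HU F _ (fun _ _ => 0) (twisted_not_phi_ge U HU r _ Hr1) Hp).
  - exact (proves_phi_ge F r HF Hr).
Qed.
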